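(* Let $\|\cdot\|$ be an arbitrary seminorm on $\mathbb{R}^n$, and let $\gamma>0$, $\alpha\ge 1$ and $i\in\mathbb{N}$ be constants. Then there is a class $\mathfrak{C}$ consisting of a single (infinite) sequence of cost functions such that, for every deterministic or randomized online algorithm $A$, either $R_i(A)=\Omega(T)$, or, for all sufficiently large $T$, both $CR^\alpha_{i+1}(A)\ge\gamma$ and $CD^\alpha_{i+1}(A)\ge\gamma T$.
   Context: Smoothed online convex optimization (SOCO): a convex decision space $F\subseteq(\mathbb{R}^+)^n$ and a seminorm $\|\cdot\|$ on $\mathbb{R}^n$ are fixed. An online (possibly randomized) algorithm $A$ faces a sequence of cost functions $c^1,c^2,\dots$ with $c^t:F\to\mathbb{R}^+$, and produces decisions $x^1,x^2,\dots\in F$, where $x^s$ may depend only on $c^1,\dots,c^{s-1}$ and on the algorithm's internal randomness. For $\alpha\ge 0$ and lookahead $i\in\mathbb{N}$, the $\alpha$-penalized cost with lookahead $i$ over horizon $T$ is $C_i^\alpha(A)=\mathbb{E}\big[\sum_{t=1}^T c^t(x^{t+i})+\alpha\|x^{t+i}-x^{t+i-1}\|\big]$, with initial action $x^i=0$ and expectation over the algorithm's randomness; write $C_i=C_i^1$. The static optimum is $OPT_s=\min_{x\in F}\sum_{t=1}^T c^t(x)$, and for $\alpha\ge1$ the $\alpha$-unfair dynamic optimum is $OPT_d^\alpha=\min_{(x^1,\dots,x^T)\in F^T}\sum_{t=1}^T c^t(x^t)+\alpha\|x^t-x^{t-1}\|$ (with $x^0=0$). For a class $\mathfrak{C}$ of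 cost functions: the regret $R_i(A)$ is (at most) $\rho(T)$ if for every sequence $(c^1,\dots,c^T)\in\mathfrak{C}^T$, $C_i^0(A)-OPT_s\le\rho(T)$; the $\alpha$-unfair competitive ratio $CR_i^\alpha(A)$ is $\rho(T)$ if for every such sequence $C_i(A)\le\rho(T)\,OPT_d^\alpha+O(1)$; the $\alpha$-unfair competitive difference $CD_i^\alpha(A)$ is $\rho(T)$ if for every such sequence $C_i(A)-OPT_d^\alpha\le\rho(T)$. Statements such as $R_i(A)=\Omega(T)$ or $CR_i^\alpha(A)\ge\gamma$ refer to the best (smallest) $\rho(T)$ for which the corresponding guarantee holds over $\mathfrak{C}$. *)

From HB Require Import structures.
From mathcomp Require Import all_boot all_order all_algebra.
From mathcomp Require Import all_classical all_reals all_analysis.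
Set Implicit Arguments. Unset Strict Implicit. Unset Printing Implicit Defensive.
Import Order.TTheory GRing.Theory Num.Theory.
Import numFieldNormedType.Exports.
Local Open Scope classical_set_scope.
Local Open Scope ring_scope.

Section SOCO.
Variables (R : realType) (n : nat).
Local Notation vec := 'rV[R]_n.

Definition seminorm (N : vec -> R) : Prop :=
  (forall x y, N (x + y) <= N x + N y) /\
  (forall (a : R) x, N (a *: x) = `|a| * N x).

Definition decision_space (F : set vec) : Prop :=
  F !=set0 /\
  (forall x y (l : R), F x -> F y -> 0 <= l <= 1 -> F (l *: x + (1 - l) *: y)) /\
  (forall x, F x -> forall j : 'I_n, 0 <= x ord0 j).

Definition cost_function (F : set vec) (f : vec -> R) : Prop :=
  (forall x, F x -> 0 <= f x) /\
  (forall x y (l : R), F x -> F y -> 0 <= l <= 1 ->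
     f (l *: x + (1 - l) *: y) <= l * f x + (1 - l) * f y).

(* A cost sequence: c t is the cost function c^t (t >= 1; c 0 unused). *)
Definition cost_seq := nat -> vec -> R.

(* A randomized online algorithm with randomness w in Omega: the decision
   x^s = A w s cs may only depend on c^1,...,c^(s-1) and w. *)
Definition online_algorithm (F : set vec) (d : measure_display)
    (Omega : measurableType d) (A : Omega -> nat -> cost_seq -> vec) : Prop :=
  (forall w s (cs cs' : cost_seq),
      (forall t, (0 < t < s)%N -> cs t = cs' t) -> A w s cs = A w s cs') /\
  (forall w s cs, (0 < s)%N -> F (A w s cs)) /\
  (forall s cs (j : 'I_n), measurable_fun setT (fun w => A w s cs ord0 j)).

(* Decisions with lookahead i: the initial action x^i is set to 0. *)
Definition look (x : nat -> vec) (i s : nat) : vec :=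
  if s == i then 0 else x s.

Definition hit_cost (c : cost_seq) (x : nat -> vec) (i T : nat) : R :=
  \sum_(1 <= t < T.+1) c t (look x i (t + i)).

Definition move_cost (N : vec -> R) (x : nat -> vec) (i T : nat) : R :=
  \sum_(1 <= t < T.+1) N (look x i (t + i) - look x i (t + i).-1).

Definition pen_cost (N : vec -> R) (alpha : R) (d : measure_display)
    (Omega : measurableType d) (P : probability Omega R)
    (A : Omega -> nat -> cost_seq -> vec) (c : cost_seq) (i T : nat) : \bar R :=
  (\int[P]_w ((hit_cost c (fun s => A w s c) i T
               + alpha * move_cost N (fun s => A w s c) i T)%:E))%E.

Definition OPT_s (F : set vec) (c : cost_seq) (T : nat) : R :=
  inf [set \sum_(1 <= t < T.+1) c t x | x in F].

Definition OPT_d (F : set vec) (N : vec -> R) (alpha : R) (c : cost_seq)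
    (T : nat) : R :=
  inf [set \sum_(1 <= t < T.+1) (c t (x t) + alpha * N (x t - x t.-1)) |
       x in [set x : nat -> vec | x 0%N = 0 /\
                                  forall t, (0 < t <= T)%N -> F (x t)]].

Definition regret_bound F (N : vec -> R) d (Omega : measurableType d)
    (P : probability Omega R) A (c : cost_seq) (i : nat) (rho : nat -> R) : Prop :=
  forall T, (pen_cost N 0 P A c i T <= (OPT_s F c T + rho T)%:E)%E.

Definition cr_bound F (N : vec -> R) (alpha : R) d (Omega : measurableType d)
    (P : probability Omega R) A (c : cost_seq) (i : nat) (rho : nat -> R)
    (K : R) : Prop :=
  forall T, (pen_cost N 1 P A c i T <= (rho T * OPT_d F N alpha c T + K)%:E)%E.

Definition cd_bound F (N : vec -> R) (alpha : R) d (Omega : measurableType d)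
    (P : probability Omega R) A (c : cost_seq) (i : nat) (rho : nat -> R) : Prop :=
  forall T, (pen_cost N 1 P A c i T <= (OPT_d F N alpha c T + rho T)%:E)%E.

End SOCO.

(* rho(T) = Omega(T): not o(T), i.e. rho(T) >= k T for infinitely many T. *)
Definition OmegaT {R : realType} (rho : nat -> R) : Prop :=
  exists k : R, 0 < k /\ forall T0 : nat, exists T : nat, (T0 <= T)%N /\ k * T%:R <= rho T.

Definition eventually_nat (P : nat -> Prop) : Prop :=
  exists T0 : nat, forall T : nat, (T0 <= T)%N -> P T.

From HB Require Import structures.
From mathcomp Require Import all_boot all_order all_algebra.
From mathcomp Require Import all_classical all_reals all_analysis.
From mathcomp Require Import ring lra measurable_realfun.
Import Order.TTheory GRing.Theory Num.Theory.
Set Implicit Arguments. Unset Strict Implicit. Unset Printing Implicit Defensive.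
Local Open Scope classical_set_scope.
Local Open Scope ring_scope.

(* On the unit cube, let the costs alternate between M x_j (odd t) and
   M (1 - x_j) (even t).  The costs c^t and c^(t+1) add up to M, so with
   lookahead i+1 over T rounds and with lookahead i over T+1 rounds an
   algorithm plays the same decisions against complementary costs: the two
   hitting costs add up to at least M T.  The static point x_j = 1/2 costs
   only M (T+1)/2, so sublinear regret with lookahead i forces a cost of
   about M T/2 with lookahead i+1, while the dynamic optimum, which follows
   the costs with one unit move per round, pays at most alpha ||e_j|| T.
   Taking M large against gamma, alpha and ||e_j|| gives both bounds. *)

Section Seminorm.
Variables (R : realType) (n : nat) (N : 'rV[R]_n -> R).
Hypothesis sN : seminorm N.

Lemma seminorm0 : N 0 = 0.
Proof. by have := sN.2 0 0; rewrite scale0r normr0 mul0r. Qed.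

Lemma seminormN x : N (- x) = N x.
Proof. by rewrite -scaleN1r sN.2 normrN normr1 mul1r. Qed.

Lemma seminorm_ge0 x : 0 <= N x.
Proof. by have := sN.1 x (- x); rewrite subrr seminorm0 seminormN; lra. Qed.

End Seminorm.

Lemma ge0_le_integral_nonmeasurable d (T : measurableType d) (R : realType)
    (mu : {measure set T -> \bar R}) (f1 f2 : T -> \bar R) :
  (forall x, 0 <= f1 x)%E -> (forall x, f1 x <= f2 x)%E ->
  (\int[mu]_x f1 x <= \int[mu]_x f2 x)%E.
Proof.
move=> f10 f12.
have f20 x : (0 <= f2 x)%E by exact: le_trans (f10 x) (f12 x).
rewrite !ge0_integralTE //; apply: ereal_sup_le => _ [s /= s_le_f1 <-].
by exists s => //= x; exact: le_trans (s_le_f1 x) (f12 x).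
Qed.

Lemma sumr_nat_ge0 (R : numDomainType) (m k : nat) (F : nat -> R) :
  (forall t, (m <= t < k)%N -> 0 <= F t) -> 0 <= \sum_(m <= t < k) F t.
Proof. by move=> F0; rewrite big_nat_cond; apply: sumr_ge0 => t /andP[/F0]. Qed.

Lemma look_lookahead (R : realType) (n : nat) (x : nat -> 'rV[R]_n) i t :
  (0 < t)%N -> look x i (t + i) = x (t + i).
Proof. by move=> t_gt0; rewrite /look -{2}[i]add0n eqn_add2r gtn_eqF. Qed.

Section Optima.
Variables (R : realType) (n : nat) (F : set 'rV[R]_n) (c : cost_seq R n).
Hypothesis c_ge0 : forall t x, F x -> 0 <= c t x.

Lemma OPT_s_le x T : F x -> OPT_s F c T <= \sum_(1 <= t < T.+1) c t x.
Proof.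
move=> Fx; apply: ge_inf; last by exists x.
by exists 0 => _ [y Fy <-]; apply: sumr_nat_ge0 => t _; exact: c_ge0.
Qed.

Variables (N : 'rV[R]_n -> R) (alpha : R).
Hypotheses (sN : seminorm N) (alpha_ge0 : 0 <= alpha).

Let trajectory_cost_ge0 (x : nat -> 'rV[R]_n) T :
  (forall t, (0 < t <= T)%N -> F (x t)) ->
  0 <= \sum_(1 <= t < T.+1) (c t (x t) + alpha * N (x t - x t.-1)).
Proof.
move=> Fx; apply: sumr_nat_ge0 => t /andP[t_gt0 t_leT].
rewrite addr_ge0 ?mulr_ge0 ?(seminorm_ge0 sN) //.
by apply/c_ge0/Fx; rewrite t_gt0.
Qed.

Lemma OPT_d_le (x : nat -> 'rV[R]_n) T :
  x 0%N = 0 -> (forall t, (0 < t <= T)%N -> F (x t)) ->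
  OPT_d F N alpha c T <= \sum_(1 <= t < T.+1) (c t (x t) + alpha * N (x t - x t.-1)).
Proof.
move=> x0 Fx; apply: ge_inf; last by exists x.
by exists 0 => _ [y [_ Fy] <-]; exact: trajectory_cost_ge0.
Qed.

Lemma OPT_d_ge0 T : F !=set0 -> 0 <= OPT_d F N alpha c T.
Proof.
move=> [y Fy]; apply: lb_le_inf => [|_ [x [_ Fx] <-]]; last exact: trajectory_cost_ge0.
by eexists; exists (fun t => if t is 0%N then 0 else y) => //; split => // [[|t]].
Qed.

End Optima.

Definition unit_cube {R : realType} {n : nat} : set 'rV[R]_n :=
  fun x => forall k, 0 <= x ord0 k <= 1.

Lemma unit_cube_decision_space (R : realType) (n : nat) :
  decision_space (@unit_cube R n).
Proof.
split; first by exists 0 => k; rewrite mxE lexx ler01.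
split; last by move=> x x_cube k; case/andP: (x_cube k).
move=> x y l x_cube y_cube /andP[l_ge0 l_le1] k; rewrite !mxE.
by move: (x_cube k) (y_cube k) => /andP[? ?] /andP[? ?]; apply/andP; split; nra.
Qed.

Section AlternatingCosts.
Variables (R : realType) (n : nat) (j : 'I_n) (M : R).
Hypothesis M_ge0 : 0 <= M.
Local Notation cube := (@unit_cube R n).

Definition alt_cost : cost_seq R n :=
  fun t x => M * (if odd t then x ord0 j else 1 - x ord0 j).

Lemma alt_cost_ge0 t x : cube x -> 0 <= alt_cost t x.
Proof.
by move=> /(_ j) /andP[? ?]; rewrite /alt_cost; case: odd; apply: mulr_ge0 => //; lra.
Qed.

Lemma alt_cost_function t : cost_function cube (alt_cost t).
Proof.
split=> [x|x y l _ _ _]; first exact: alt_cost_ge0.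
by rewrite /alt_cost !mxE; case: odd; lra.
Qed.

Lemma alt_costSn t x : alt_cost t x + alt_cost t.+1 x = M.
Proof. by rewrite /alt_cost /=; case: odd => /=; ring. Qed.

Lemma hit_cost_lookaheadS (x : nat -> 'rV[R]_n) i T :
  hit_cost alt_cost x i.+1 T + hit_cost alt_cost x i T.+1
  = M * T%:R + alt_cost 1 (x i.+1).
Proof.
elim: T => [|T IH].
  by rewrite /hit_cost big_geq // big_nat1 look_lookahead // add0r mulr0 add0r.
rewrite /hit_cost in IH *; rewrite big_nat_recr //= [in X in _ + X]big_nat_recr //=.
rewrite !look_lookahead // (_ : T.+1 + i.+1 = T.+2 + i)%R; last exact: esym (addSnnS _ _).
by have := alt_costSn T.+1 (x (T.+2 + i)); rewrite -natr1; lra.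
Qed.

Lemma OPT_s_alt_cost T : OPT_s cube alt_cost T <= M * T%:R / 2.
Proof.
have half_cube : cube (const_mx 2^-1) by move=> k; rewrite mxE; apply/andP; split; lra.
apply: le_trans (OPT_s_le alt_cost_ge0 T half_cube) _.
rewrite (eq_big_nat _ _ (F2 := fun _ => M / 2)); last first.
  by move=> t _; rewrite /alt_cost !mxE; case: odd => //; congr (_ * _); field.
by rewrite sumr_const_nat subn1 /= -mulr_natr; lra.
Qed.

Lemma OPT_d_alt_cost (N : 'rV[R]_n -> R) (alpha : R) T :
  seminorm N -> 0 <= alpha ->
  OPT_d cube N alpha alt_cost T <= alpha * N (delta_mx 0 j) * T%:R.
Proof.
move=> sN alpha_ge0; set e := delta_mx 0 j.
(* follow the costs: x_j = 0 in odd rounds and x_j = 1 in even rounds *)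
pose b t : R := if (t != 0%N) && ~~ odd t then 1 else 0.
have b01 t : 0 <= b t <= 1 by rewrite /b; case: ifP => _; rewrite lexx ler01.
apply: le_trans (OPT_d_le alt_cost_ge0 sN alpha_ge0 (x := fun t => b t *: e) _ _) _.
- by rewrite /b scale0r.
- by move=> t _ k; rewrite !mxE; case: (k == j); rewrite /= ?mulr1 ?mulr0 ?lexx ?ler01.
have -> : alpha * N e * T%:R = \sum_(1 <= t < T.+1) alpha * N e.
  by rewrite sumr_const_nat subn1 mulr_natr.
apply: ler_sum_nat => t /andP[t_gt0 _].
have -> : alt_cost t (b t *: e) = 0.
  by rewrite /alt_cost !mxE !eqxx mulr1 /b -lt0n t_gt0; case: odd; rewrite /= ?subrr mulr0.
rewrite add0r -scalerBl sN.2; apply: ler_wpM2l => //.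
apply: ler_piMl; first exact: seminorm_ge0.
by move: (b01 t) (b01 t.-1) => /andP[? ?] /andP[? ?]; rewrite ler_norml; apply/andP; split; lra.
Qed.

Lemma measurable_hit_cost (d : measure_display) (Omega : measurableType d)
    (x : Omega -> nat -> 'rV[R]_n) i T :
  (forall s (k : 'I_n), measurable_fun setT (fun w => x w s ord0 k)) ->
  measurable_fun setT (fun w => hit_cost alt_cost (x w) i T).
Proof.
move=> mx; apply: measurable_sum => t; rewrite /look; case: eqP => _.
  exact: measurable_cst.
rewrite /alt_cost; case: odd; apply: measurable_funM => //.
by apply: measurable_funB.
Qed.

End AlternatingCosts.

Section Eventually.
Variable R : realType.

Lemma eventually_nat_impl (Q1 Q2 : nat -> Prop) :
  eventually_nat Q1 -> (forall T, Q1 T -> Q2 T) -> eventually_nat Q2.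
Proof. by move=> [T0 Q1T] Q12; exists T0 => T /Q1T /Q12. Qed.

Lemma eventually_natI (Q1 Q2 : nat -> Prop) :
  eventually_nat Q1 -> eventually_nat Q2 -> eventually_nat (fun T => Q1 T /\ Q2 T).
Proof.
move=> [T1 Q1T] [T2 Q2T]; exists (maxn T1 T2) => T.
by rewrite geq_max => /andP[/Q1T ? /Q2T ?].
Qed.

Lemma eventually_natS (Q : nat -> Prop) :
  eventually_nat Q -> eventually_nat (fun T => Q T.+1).
Proof. by move=> [T0 QT]; exists T0 => T /leqW /QT. Qed.

Lemma eventually_nat_gt (x : R) : eventually_nat (fun T => x < T%:R).
Proof.
exists (Num.truncn x).+1 => T le_T; apply: lt_le_trans (truncnS_gt x) _.
by rewrite ler_nat.
Qed.

Lemma not_OmegaT_lt (rho : nat -> R) :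
  ~ OmegaT rho -> eventually_nat (fun T => rho T < T%:R).
Proof.
move=> not_linear; apply: contrapT => not_small; apply: not_linear.
exists 1; split => // T0; apply: contrapT => /forallNP never.
apply: not_small; exists T0 => T le_T; rewrite ltNge; apply/negP => rho_ge.
by apply: (never T); split => //; rewrite mul1r.
Qed.

End Eventually.

Section ExpectedCost.
Variables (R : realType) (n : nat) (j : 'I_n) (M : R).
Hypothesis M_ge0 : 0 <= M.
Variables (d : measure_display) (Omega : measurableType d) (P : probability Omega R).
Variable A : Omega -> nat -> cost_seq R n -> 'rV[R]_n.
Hypothesis A_online : online_algorithm unit_cube A.
Variables (N : 'rV[R]_n -> R) (rho : nat -> R).
Hypothesis sN : seminorm N.
Local Notation c := (alt_cost j M).
Local Notation hit w i T := (hit_cost c (fun s => A w s c) i T).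

Lemma hit_cost_ge0 w i T : 0 <= hit w i T.
Proof.
apply: sumr_nat_ge0 => t /andP[t_gt0 _]; rewrite look_lookahead //.
by apply: alt_cost_ge0 => //; apply: A_online.2.1; rewrite addn_gt0 t_gt0.
Qed.

(* No measurability is needed here: the movement cost under an arbitrary
   seminorm N is not known to be measurable. *)
Lemma integral_hit_le_pen_cost i T :
  (\int[P]_w (hit w i T)%:E <= pen_cost N 1 P A c i T)%E.
Proof.
apply: ge0_le_integral_nonmeasurable => w; rewrite lee_fin ?hit_cost_ge0 //.
by rewrite mul1r lerDl; apply: sumr_nat_ge0 => t _; exact: seminorm_ge0.
Qed.

Lemma integral_hit_lookaheadS i T :
  ((M * T%:R)%:E <= \int[P]_w (hit w i.+1 T)%:E + \int[P]_w (hit w i T.+1)%:E)%E.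
Proof.
have mhit i' T' : measurable_fun setT (fun w => (hit w i' T')%:E).
  by apply/measurable_EFinP/measurable_hit_cost => s k; exact: A_online.2.2.
rewrite -ge0_integralD // => [|w _|w _]; rewrite ?lee_fin ?hit_cost_ge0 //.
rewrite -[X in (X <= _)%E]mule1 -(probability_setT P) -integral_cst //.
apply: ge0_le_integral_nonmeasurable => w; rewrite ?lee_fin ?mulr_ge0 //.
rewrite hit_cost_lookaheadS lerDl.
by apply: alt_cost_ge0 => //; exact: A_online.2.1.
Qed.

Lemma regret_pen_cost_lookaheadS i T r :
  regret_bound unit_cube N P A c i rho ->
  (pen_cost N 1 P A c i.+1 T <= r%:E)%E ->
  M * T%:R <= r + (M * T.+1%:R / 2 + rho T.+1).
Proof.
move=> regret pen_le_r.
have static : (\int[P]_w (hit w i T.+1)%:E <= (M * T.+1%:R / 2 + rho T.+1)%:E)%E.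
  have := regret T.+1; rewrite /pen_cost.
  under eq_integral => w _ do rewrite mul0r addr0.
  by move/le_trans; apply; rewrite lee_fin lerD2r OPT_s_alt_cost.
have := le_trans (integral_hit_lookaheadS i T)
  (leeD (le_trans (integral_hit_le_pen_cost i.+1 T) pen_le_r) static).
by rewrite -EFinD lee_fin.
Qed.

Lemma pen_cost_linear_lb i :
  regret_bound unit_cube N P A c i rho -> eventually_nat (fun T => rho T < T%:R) ->
  eventually_nat (fun T => forall r, (pen_cost N 1 P A c i.+1 T <= r%:E)%E ->
                             (M / 2 - 1) * T%:R - (M / 2 + 1) <= r).
Proof.
move=> regret /eventually_natS small.
apply: (eventually_nat_impl small) => T small_T r pen_le_r.
by have := regret_pen_cost_lookaheadS regret pen_le_r; move: small_T; rewrite -natr1; lra.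
Qed.

End ExpectedCost.

Section LinearLowerBound.
Variables (R : realType) (C : nat -> \bar R) (opt : nat -> R) (a s D : R).
Hypotheses (opt_ge0 : forall T, 0 <= opt T) (opt_le : forall T, opt T <= a * T%:R).
Hypothesis C_lb :
  eventually_nat (fun T => forall r, (C T <= r%:E)%E -> s * T%:R - D <= r).

Lemma ratio_eventually_ge (gamma K : R) (rho : nat -> R) :
  0 <= gamma -> gamma * a + 1 <= s ->
  (forall T, (C T <= (rho T * opt T + K)%:E)%E) ->
  eventually_nat (fun T => gamma <= rho T).
Proof.
move=> gamma_ge0 slope C_le.
apply: (eventually_nat_impl (eventually_natI C_lb (eventually_nat_gt (D + K)))).
move=> T [/(_ _ (C_le T)) C_lb_T large_T].
rewrite leNgt; apply/negP => rho_lt.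
have : rho T * opt T <= gamma * (a * T%:R).
  apply: le_trans (ler_wpM2r (opt_ge0 T) (ltW rho_lt))
    (ler_wpM2l gamma_ge0 (opt_le T)).
have : (gamma * a + 1) * T%:R <= s * T%:R by rewrite ler_wpM2r.
lra.
Qed.

Lemma difference_eventually_ge (gamma : R) (rho : nat -> R) :
  a + gamma + 1 <= s ->
  (forall T, (C T <= (opt T + rho T)%:E)%E) ->
  eventually_nat (fun T => gamma * T%:R <= rho T).
Proof.
move=> slope C_le.
apply: (eventually_nat_impl (eventually_natI C_lb (eventually_nat_gt D))).
move=> T [/(_ _ (C_le T)) C_lb_T large_T].
have : (a + gamma + 1) * T%:R <= s * T%:R by rewrite ler_wpM2r.
have := opt_le T; lra.
Qed.

End LinearLowerBound.

Theorem theorem1 (R : realType) (n : nat) (N : 'rV[R]_n -> R)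
    (gamma alpha : R) (i : nat) :
  (0 < n)%N -> seminorm N -> 0 < gamma -> 1 <= alpha ->
  exists (F : set 'rV[R]_n) (c : cost_seq R n),
    decision_space F /\ (forall t, cost_function F (c t)) /\
    forall (d : measure_display) (Omega : measurableType d)
           (P : probability Omega R) (A : Omega -> nat -> cost_seq R n -> 'rV[R]_n),
      online_algorithm F A ->
      (forall rho, regret_bound F N P A c i rho -> OmegaT rho)
      \/
      ((forall rho K, cr_bound F N alpha P A c i.+1 rho K ->
          eventually_nat (fun T => gamma <= rho T)) /\
       (forall rho, cd_bound F N alpha P A c i.+1 rho ->
          eventually_nat (fun T => gamma * T%:R <= rho T))).
Proof.
move=> n_gt0 sN gamma_gt0 alpha_ge1; have alpha_ge0 : 0 <= alpha by lra.
pose j := Ordinal n_gt0; pose a := alpha * N (delta_mx 0 j).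
have a_ge0 : 0 <= a by rewrite mulr_ge0 ?(seminorm_ge0 sN).
pose M := 2 * (a * (gamma + 1) + gamma + 2).
have a_gamma_ge0 : 0 <= a * gamma by rewrite mulr_ge0 // ltW.
have M_ge0 : 0 <= M by rewrite /M; lra.
exists unit_cube, (alt_cost j M); split; first exact: unit_cube_decision_space.
split=> [t|d Omega P A A_online]; first exact: alt_cost_function.
have [|/existsNP[rho /not_implyP[regret /not_OmegaT_lt small]]] :=
  pselect (forall rho, regret_bound unit_cube N P A (alt_cost j M) i rho -> OmegaT rho).
  by left.
right; have C_lb := pen_cost_linear_lb M_ge0 A_online sN regret small.
have opt_ge0 T := OPT_d_ge0 (alt_cost_ge0 j M_ge0) sN alpha_ge0 T
  (unit_cube_decision_space R n).1.
have opt_le T : OPT_d unit_cube N alpha (alt_cost j M) T <= a * T%:R.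
  exact: (OPT_d_alt_cost j M_ge0 T sN alpha_ge0).
split=> [rho' K cr|rho' cd].
- by apply: (ratio_eventually_ge opt_ge0 opt_le C_lb _ _ cr); rewrite /M; lra.
- by apply: (difference_eventually_ge opt_le C_lb _ cd); rewrite /M; lra.
Qed.
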